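(* Let $X$ be a Hausdorff space and $\mu:X^k\to X$ a continuous $k$-mean that is $\beta$-stable and admits a $\beta$-extension $\tilde\mu$. Then $\tilde\mu$ is a stable extension of $\mu$.
   Context: A $k$-mean is a map $\mu:X^k\to X$ with $\mu(x,\ldots,x)=x$. Barycentric operator $\beta:X^{k+1}\to X^{k+1}$, $\beta(\mathbf{x})_j=\mu(\pi_{\neq j}\mathbf{x})$ with $\pi_{\neq j}(x_1,\ldots,x_{k+1})=(x_1,\ldots,x_{j-1},x_{j+1},\ldots,x_{k+1})$. A $(k+1)$-mean $\tilde\mu$ is a $\beta$-extension of $\mu$ if $\beta^n(\mathbf{x})\to(\tilde\mu(\mathbf{x}),\ldots,\tilde\mu(\mathbf{x}))$ for every $\mathbf{x}$. $\mu$ is $\beta$-stable if for all $\mathbf{x}\in X^{k+1}$: $\pi_{k+1}(\mathbf{x})=\mu(\pi_{\neq k+1}\mathbf{x})$ implies $\pi_{k+1}(\beta(\mathbf{x}))=\mu(\pi_{\neq k+1}(\beta(\mathbf{x})))$, where $\pi_{k+1}$ is the last coordinate. A $(k+1)$-mean $\nu$ is a stable extension of $\mu$ if $\nu(x_1,\ldots,x_k,\mu(x_1,\ldots,x_k))=\mu(x_1,\ldots,x_k)$ for all $x_1,\ldots,x_k\in X$. *)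

From HB Require Import structures.
From mathcomp Require Import all_boot all_order all_algebra.
From mathcomp Require Import all_classical all_reals all_analysis.
Set Implicit Arguments. Unset Strict Implicit. Unset Printing Implicit Defensive.
Local Open Scope classical_set_scope.

(* X^k with the product topology; coordinates indexed by 'I_k = {0,...,k-1}
   (paper's coordinate j+1 is index j here). *)
Notation tup X k := {ptws 'I_k -> X}.

Definition is_mean (X : Type) (k : nat) (mu : ('I_k -> X) -> X) :=
  forall x : X, mu (fun _ => x) = x.

Definition pi_neq (X : Type) (k : nat) (j : 'I_k.+1) (x : 'I_k.+1 -> X) : 'I_k -> X :=
  fun i => x (lift j i).

Definition beta (X : Type) (k : nat) (mu : ('I_k -> X) -> X)
  (x : 'I_k.+1 -> X) : 'I_k.+1 -> X :=
  fun j => mu (pi_neq j x).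

Definition beta_extension (X : topologicalType) (k : nat)
  (mu : ('I_k -> X) -> X) (nu : ('I_k.+1 -> X) -> X) :=
  is_mean nu /\
  forall x : 'I_k.+1 -> X,
    (fun n : nat => (iter n (beta mu) x : tup X k.+1)) @ \oo -->
      ((fun _ : 'I_k.+1 => nu x) : tup X k.+1).

(* beta-stability (pi_{k+1} = last coordinate = ord_max) *)
Definition beta_stable (X : Type) (k : nat) (mu : ('I_k -> X) -> X) :=
  forall x : 'I_k.+1 -> X,
    x ord_max = mu (pi_neq ord_max x) ->
    beta mu x ord_max = mu (pi_neq ord_max (beta mu x)).

Definition snoc (X : Type) (k : nat) (x : 'I_k -> X) (y : X) : 'I_k.+1 -> X :=
  fun i => if unlift ord_max i is Some i' then x i' else y.

Definition stable_extension (X : Type) (k : nat)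
  (mu : ('I_k -> X) -> X) (nu : ('I_k.+1 -> X) -> X) :=
  is_mean nu /\ forall x : 'I_k -> X, nu (snoc x (mu x)) = mu x.

From HB Require Import structures.
From mathcomp Require Import all_boot all_order all_algebra.
From mathcomp Require Import all_classical all_reals all_analysis.
Local Open Scope classical_set_scope.

(* Beta-stability keeps the iterates of beta on the locus
   where the last coordinate is mu of the others, and there the last coordinate
   of beta z, being by definition mu of the others, is the last coordinate of z.
   So the last coordinate of beta^n (x, mu x) is constantly mu x, while it
   converges to nu (x, mu x); limits are unique in a Hausdorff space. *)

Lemma pi_neq_snoc (X : Type) (k : nat) (x : 'I_k -> X) (y : X) :
  pi_neq ord_max (snoc x y) = x.
Proof. by apply: funext => i; rewrite /pi_neq /snoc liftK. Qed.

Lemma snoc_max (X : Type) (k : nat) (x : 'I_k -> X) (y : X) :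
  snoc x y ord_max = y.
Proof. by rewrite /snoc unlift_none. Qed.

Section BetaStable.

Context {X : Type} {k : nat} (mu : ('I_k -> X) -> X).
Hypothesis mu_stable : beta_stable mu.

Definition last_is_mean (x : 'I_k.+1 -> X) := x ord_max = mu (pi_neq ord_max x).

Lemma last_is_mean_iter {x} n :
  last_is_mean x -> last_is_mean (iter n (beta mu) x).
Proof. by move=> Hx; elim: n => //= n; apply: mu_stable. Qed.

Lemma iter_beta_last {x} n :
  last_is_mean x -> iter n (beta mu) x ord_max = x ord_max.
Proof.
move=> Hx; elim: n => //= n IHn.
by rewrite /beta -(last_is_mean_iter n Hx) IHn.
Qed.

End BetaStable.

Lemma cvg_ptws_coord_const {X : topologicalType} {k : nat}
    {T : Type} {F : set_system T} {FF : ProperFilter F}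
    {u : T -> tup X k} {l : tup X k} {i : 'I_k} {a : X} :
  hausdorff_space X -> u @ F --> l -> (forall t, u t i = a) -> l i = a.
Proof.
move=> hX ul ui.
have uil : (fun t => u t i) @ F --> l i :=
  cvg_comp _ _ ul (@proj_continuous _ (fun=> X) i l).
rewrite (funext ui) in uil.
exact: (cvg_unique hX uil (cvg_cst a)).
Qed.

Theorem proposition8p2 (X : topologicalType) (k : nat)
  (mu : ('I_k -> X) -> X) (nu : ('I_k.+1 -> X) -> X) :
  hausdorff_space X ->
  is_mean mu ->
  continuous (mu : tup X k -> X) ->
  beta_stable mu ->
  beta_extension mu nu ->
  stable_extension mu nu.
Proof.
move=> hX _ _ mu_stable [nu_mean nu_lim]; split => // x.
set y := snoc x (mu x).
have y_last_is_mean : last_is_mean mu y.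
  by rewrite /last_is_mean /y pi_neq_snoc snoc_max.
have last_const n : iter n (beta mu) y ord_max = mu x.
  by rewrite iter_beta_last // /y snoc_max.
exact: cvg_ptws_coord_const hX (nu_lim y) last_const.
Qed.
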